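(* Let $\mathcal{B}$ be a Boolean control network with state set $\mathcal{S}$. For any two nonempty sets of states $\mathsf{S}^1,\mathsf{S}^2\subseteq\mathcal{S}$, if $\mathsf{S}^1\subseteq\mathsf{S}^2$ and $\Gamma(\mathsf{S}^2)\ne\infty$, then $\psi(\mathsf{S}^2)\subseteq\psi(\mathsf{S}^1)$.
   Context: $\mathbb{B}=\{0,1\}$. A BCN has inputs $\mathcal{I}=\mathbb{B}^\ell$, states $\mathcal{S}=\mathbb{B}^m$, outputs $\mathcal{O}=\mathbb{B}^n$ and updating rules $\sigma:\mathcal{I}\times\mathcal{S}\to\mathcal{S}$, $\rho:\mathcal{S}\to\mathcal{O}$, with $\mathsf{s}(t+1)=\sigma(\mathsf{i}(t),\mathsf{s}(t))$, $\mathsf{o}(t)=\rho(\mathsf{s}(t))$. With $\varepsilon$ denoting empty input/output, let $\xi(\mathsf{i},\mathsf{s})=\sigma(\mathsf{i},\mathsf{s})$ for $\mathsf{i}\ne\varepsilon$, $\xi(\varepsilon,\mathsf{s})=\mathsf{s}$; for $\mathsf{S}\subseteq\mathcal{S}$, $\zeta(\mathsf{S},\mathsf{i},\mathsf{o})=\{\xi(\mathsf{i},\mathsf{s}):\mathsf{s}\in\mathsf{S},\rho(\xi(\mathsf{i},\mathsf{s}))=\mathsf{o}\}$ if $\mathsf{o}\ne\varepsilon$ and $\zeta(\mathsf{S},\mathsf{i},\varepsilon)=\{\xi(\mathsf{i},\mathsf{s}):\mathsf{s}\in\mathsf{S}\}$. For nonempty $\mathsf{S}$: $P_0(\mathsf{S})$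 iff $|\mathsf{S}|=1$; $P_{n+1}(\mathsf{S})$ iff $|\mathsf{S}|=1$ or there is $\mathsf{i}\in\mathcal{I}$ with $|\zeta(\mathsf{S},\mathsf{i},\varepsilon)|=|\mathsf{S}|$ such that every nonempty $\zeta(\mathsf{S},\mathsf{i},\mathsf{o})$, $\mathsf{o}\in\mathcal{O}$, satisfies $P_n$. $\Gamma(\mathsf{S})\in\mathbb{N}\cup\{\infty\}$ is the least $n$ with $P_n(\mathsf{S})$, or $\infty$ if none. For nonempty $\mathsf{S}$, $\psi(\mathsf{S})=\{\mathsf{i}\in\mathcal{I}: |\zeta(\mathsf{S},\mathsf{i},\varepsilon)|=|\mathsf{S}|$ and for all $\mathsf{o}\in\mathcal{O}$, $\zeta(\mathsf{S},\mathsf{i},\mathsf{o})\ne\emptyset\Rightarrow\Gamma(\zeta(\mathsf{S},\mathsf{i},\mathsf{o}))\ne\infty\}$. *)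

From Stdlib Require Import ClassicalEpsilon.
From mathcomp Require Import all_boot.
Set Implicit Arguments. Unset Strict Implicit. Unset Printing Implicit Defensive.

Record BCN (l m n : nat) := {
  sigma : l.-tuple bool -> m.-tuple bool -> m.-tuple bool;
  rho   : m.-tuple bool -> n.-tuple bool }.

Section Defs.
Variables (l m n : nat) (B : BCN l m n).
Local Notation I := (l.-tuple bool).
Local Notation St := (m.-tuple bool).
Local Notation O := (n.-tuple bool).

(* None plays the role of the empty input / output epsilon. *)
Definition xi (i : option I) (s : St) : St :=
  match i with Some i' => sigma B i' s | None => s end.

Definition zeta (S : {set St}) (i : option I) (o : option O) : {set St} :=
  match o with
  | Some o' => [set xi i s | s in S & rho B (xi i s) == o']
  | None => [set xi i s | s in S]
  end.

(* P_k(S) (meaningful for nonempty S). *)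
Fixpoint Pn (k : nat) (S : {set St}) : bool :=
  match k with
  | 0 => #|S| == 1
  | k'.+1 => (#|S| == 1) ||
      [exists i : I, (#|zeta S (Some i) None| == #|S|) &&
         [forall o : O, (zeta S (Some i) (Some o) != set0) ==>
                         Pn k' (zeta S (Some i) (Some o))]]
  end.

(* Gamma S : least k with P_k S, or None (= infinity). *)
Definition Gamma (S : {set St}) : option nat :=
  match excluded_middle_informative (exists k, Pn k S) with
  | left ex => Some (ex_minn ex)
  | right _ => None
  end.

Definition psi (S : {set St}) : {set I} :=
  [set i : I | (#|zeta S (Some i) None| == #|S|) &&
     [forall o : O, (zeta S (Some i) (Some o) != set0) ==>
                     (Gamma (zeta S (Some i) (Some o)) != None)]].
End Defs.

From mathcomp Require Import all_boot.
From Stdlib Require Import ClassicalEpsilon.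

Set Implicit Arguments.
Unset Strict Implicit.
Unset Printing Implicit Defensive.

(* Both P_{k+1} and psi ask for an input that is injective on S and whose
   nonempty output classes all satisfy some property Q (P_k, resp. Gamma < oo).
   Shrinking S keeps the input injective and only shrinks the output classes,
   so this condition passes to nonempty subsets whenever Q does; an induction
   on k then shows that every P_k, hence Gamma < oo, passes to nonempty
   subsets, and psi is antitone. *)

Lemma card_imset_inj_subset (aT rT : finType) (f : aT -> rT) (A B : {set aT}) :
  A \subset B -> #|f @: B| == #|B| -> #|f @: A| == #|A|.
Proof.
move=> sAB /imset_injP injB; apply/imset_injP => x y Ax Ay.
by apply: injB; apply: (subsetP sAB).
Qed.

Lemma card1_subset (T : finType) (A B : {set T}) :
  A \subset B -> A != set0 -> #|B| == 1 -> #|A| == 1.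
Proof.
move=> sAB A_neq0 /eqP B1; rewrite eqn_leq card_gt0 A_neq0 andbT -B1.
exact: subset_leq_card.
Qed.

Section Monotonicity.
Variables (l m n : nat) (B : BCN l m n).
Local Notation St := (m.-tuple bool).

Definition closed_nonempty_subset (Q : pred {set St}) :=
  forall S1 S2 : {set St}, S1 \subset S2 -> S1 != set0 -> Q S2 -> Q S1.

Lemma zetaS (S1 S2 : {set St}) i o :
  S1 \subset S2 -> zeta B S1 i o \subset zeta B S2 i o.
Proof.
move=> sS12; case: o => [o|] /=; last exact: imsetS.
apply/subsetP => x /imsetP[s]; rewrite inE => /andP[S1s ho] ->.
by apply/imsetP; exists s; rewrite // inE ho (subsetP sS12).
Qed.

Lemma admissible_input_subset (Q : pred {set St}) (S1 S2 : {set St}) i :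
  closed_nonempty_subset Q -> S1 \subset S2 ->
  (#|zeta B S2 (Some i) None| == #|S2|) &&
    [forall o, (zeta B S2 (Some i) (Some o) != set0) ==>
               Q (zeta B S2 (Some i) (Some o))] ->
  (#|zeta B S1 (Some i) None| == #|S1|) &&
    [forall o, (zeta B S1 (Some i) (Some o) != set0) ==>
               Q (zeta B S1 (Some i) (Some o))].
Proof.
move=> closedQ sS12 /andP[inj2 /forallP Q2].
rewrite (card_imset_inj_subset sS12 inj2); apply/forallP => o.
apply/implyP => zeta1_neq0.
have sz := zetaS (Some i) (Some o) sS12.
apply: (closedQ _ _ sz zeta1_neq0).
exact: (implyP (Q2 o)) (subset_neq0 sz zeta1_neq0).
Qed.

Lemma Pn_subset k : closed_nonempty_subset (Pn B k).
Proof.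
elim: k => [|k IHk] S1 S2 sS12 S1_neq0 /=; first exact: card1_subset.
case/orP => [S2_1|/existsP[i adm2]]; first by rewrite (card1_subset sS12).
apply/orP; right; apply/existsP; exists i.
exact: admissible_input_subset adm2.
Qed.

Lemma GammaP (S : {set St}) : Gamma B S != None <-> exists k, Pn B k S.
Proof. by rewrite /Gamma; case: excluded_middle_informative. Qed.

Lemma Gamma_finite_subset : closed_nonempty_subset (fun S => Gamma B S != None).
Proof.
move=> S1 S2 sS12 S1_neq0 /GammaP[k Pk2]; apply/GammaP.
by exists k; apply: Pn_subset Pk2.
Qed.

End Monotonicity.

Theorem lemma5 (l m n : nat) (B : BCN l m n) (S1 S2 : {set m.-tuple bool}) :
  S1 != set0 -> S2 != set0 -> S1 \subset S2 -> Gamma B S2 <> None ->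
  psi B S2 \subset psi B S1.
Proof.
move=> _ _ sS12 _; apply/subsetP => i; rewrite !inE.
exact: admissible_input_subset (@Gamma_finite_subset _ _ _ B) sS12.
Qed.
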